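(* Let $\succ$ be a binary relation on $\mathcal{F}$ satisfying Axioms A1–A7 below, and define $\succsim$ on $X$ by $x\succsim y$ iff $y\not\succ x$. Then for all $f\in\mathcal{F}$ and $x,y\in X$, if $f\succ x$ and $x\succsim y$, then $f\succ y$. Axioms: (A1) $\succ$ is asymmetric and transitive, and its restriction to $X$ is non-trivial and negatively transitive. (A2) For all $f,g,h\in\mathcal{F}$, $\{\alpha\in[0,1]:\alpha f+(1-\alpha)g\succ h\}$ and $\{\alpha\in[0,1]:h\succ\alpha f+(1-\alpha)g\}$ are open in $[0,1]$. (A3) For all $f,g\in\mathcal{F}$, $x\in X$, $\alpha\in(0,1)$: $f\succ g$ iff $\alpha f+(1-\alpha)x\succ\alpha g+(1-\alpha)x$. (A4) For all $x\in X$, $\{f:f\succ x\}$ and $\{f:x\succ f\}$ are convex. (A5) If $f(s)\succ g(s)$ for all $s\in S$ then $f\succ g$. (A6) If for all $x\in X$, $f\Join x$ implies $g\Join x$, then $f\Join g$. (A7) If $f\Join x$, $x\succ g$, $g\Join y$, $f\succ y$ (with $x,y\in X$), then $f\succ g$.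
   Context: $S$ is a set of states with algebra $\Sigma$; $X$ is a non-singleton convex subset of a real vector space; $\mathcal{F}$ is the set of simple acts $f:S\to X$ ($\Sigma$-measurable, finitely many values) with pointwise mixtures; elements of $X$ are identified with constant acts. $f\Join g$ means $f\not\succ g$ and $g\not\succ f$. *)

From mathcomp Require Import all_boot all_order all_algebra.
From mathcomp Require Import boolp classical_sets reals.
Set Implicit Arguments. Unset Strict Implicit. Unset Printing Implicit Defensive.
Import Order.TTheory GRing.Theory Num.Theory.
Local Open Scope ring_scope.
Local Open Scope classical_set_scope.

Section Defs.
Variables (R : realType) (V : lmodType R) (S : Type).

Definition is_algebra (Sig : set (set S)) : Prop :=
  Sig setT /\ (forall A, Sig A -> Sig (~` A)) /\
  (forall A B, Sig A -> Sig B -> Sig (A `|` B)).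

Definition convex_set (X : set V) : Prop :=
  forall x y (a : R), X x -> X y -> 0 <= a <= 1 -> X (a *: x + (1 - a) *: y).

Definition non_singleton (X : set V) : Prop :=
  exists x y, X x /\ X y /\ x <> y.

Definition simple_act (Sig : set (set S)) (X : set V) (f : S -> V) : Prop :=
  (forall s, X (f s)) /\
  (exists l : seq V, forall s, f s \in l) /\
  (forall v : V, Sig (f @^-1` [set v])).

Definition cst_act (x : V) : S -> V := fun _ => x.

Definition mix (a : R) (f g : S -> V) : S -> V :=
  fun s => a *: f s + (1 - a) *: g s.

Section Prefs.
Variables (Sig : set (set S)) (X : set V) (P : (S -> V) -> (S -> V) -> Prop).
Local Notation F := (simple_act Sig X).
Definition incomp (f g : S -> V) : Prop := ~ P f g /\ ~ P g f.

Definition A1 : Prop :=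
  (forall f g, F f -> F g -> P f g -> ~ P g f) /\
  (forall f g h, F f -> F g -> F h -> P f g -> P g h -> P f h) /\
  (exists x y, X x /\ X y /\ P (cst_act x) (cst_act y)) /\
  (forall x y z, X x -> X y -> X z ->
     ~ P (cst_act x) (cst_act y) -> ~ P (cst_act y) (cst_act z) ->
     ~ P (cst_act x) (cst_act z)).

Definition open_in_unit (A : set R) : Prop :=
  forall a, 0 <= a <= 1 -> A a ->
    exists2 e : R, 0 < e & forall b, 0 <= b <= 1 -> `|b - a| < e -> A b.

Definition A2 : Prop :=
  forall f g h, F f -> F g -> F h ->
    open_in_unit [set a | 0 <= a <= 1 /\ P (mix a f g) h] /\
    open_in_unit [set a | 0 <= a <= 1 /\ P h (mix a f g)].

Definition A3 : Prop :=
  forall f g x (a : R), F f -> F g -> X x -> 0 < a < 1 ->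
    (P f g <-> P (mix a f (cst_act x)) (mix a g (cst_act x))).

Definition A4 : Prop :=
  forall x, X x ->
    (forall f g (a : R), F f -> F g -> 0 <= a <= 1 ->
       P f (cst_act x) -> P g (cst_act x) -> P (mix a f g) (cst_act x)) /\
    (forall f g (a : R), F f -> F g -> 0 <= a <= 1 ->
       P (cst_act x) f -> P (cst_act x) g -> P (cst_act x) (mix a f g)).

Definition A5 : Prop :=
  forall f g, F f -> F g ->
    (forall s, P (cst_act (f s)) (cst_act (g s))) -> P f g.

Definition A6 : Prop :=
  forall f g, F f -> F g ->
    (forall x, X x -> incomp f (cst_act x) -> incomp g (cst_act x)) ->
    incomp f g.

Definition A7 : Prop :=
  forall f g x y, F f -> F g -> X x -> X y ->
    incomp f (cst_act x) -> P (cst_act x) g -> incomp g (cst_act y) ->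
    P f (cst_act y) -> P f g.
End Prefs.
End Defs.

(* If x ≻ y, transitivity suffices.  Otherwise x ⋈ y, and since f ≻ x rules
   out f ⋈ x, axiom A6 yields a constant z with f ⋈ z but not x ⋈ z.  As f ≻ x,
   x ≻ z is impossible, so z ≻ x, whence z ≻ y by negative transitivity on X;
   axiom A7 applied to f ⋈ z, z ≻ y, y ⋈ x and f ≻ x then gives f ≻ y. *)
From mathcomp Require Import all_boot all_order all_algebra.
From mathcomp Require Import boolp classical_sets reals.
Local Open Scope ring_scope.
Local Open Scope classical_set_scope.

Section ConstantActs.
Context {R : realType} {V : lmodType R} {S : Type}.
Context {Sig : set (set S)} {X : set V} {P : (S -> V) -> (S -> V) -> Prop}.

Local Notation F := (simple_act Sig X).
Local Notation c := (@cst_act R V S).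

Lemma simple_act_cst {v} : is_algebra Sig -> X v -> F (c v).
Proof.
move=> [SigT [SigC _]] Xv; split=> //; split; first by exists [:: v] => s; rewrite inE.
move=> w; have [<-|nvw] := pselect (v = w).
  suff -> : c v @^-1` [set v] = setT by [].
  by apply/seteqP; split => s //=.
suff -> : c v @^-1` [set w] = ~` setT by apply: SigC.
by apply/seteqP; split => s //=.
Qed.

Lemma A6_cst_witness {f g} : A6 Sig X P -> F f -> F g ->
  ~ incomp P f g ->
  exists z, [/\ X z, incomp P f (c z) & ~ incomp P g (c z)].
Proof.
move=> HA6 Ff Fg nfg; apply: contrapT => nz; apply: nfg; apply: HA6 => // z Xz fz.
by apply: contrapT => ngz; apply: nz; exists z.
Qed.

Lemma pref_incomp_cst_trans {f x y} : is_algebra Sig ->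
  A1 Sig X P -> A6 Sig X P -> A7 Sig X P -> F f -> X x -> X y ->
  P f (c x) -> incomp P (c x) (c y) -> P f (c y).
Proof.
move=> Halg [_ [trans [_ ntrans]]] HA6 HA7 Ff Xx Xy Pfx [nxy nyx].
have [|z [Xz [nfz nzf] nxz]] := A6_cst_witness HA6 Ff (simple_act_cst Halg Xx).
  by move=> [].
have Pzx : P (c z) (c x).
  apply: contrapT => nzx; apply: nxz; split=> // Pxz; apply: nfz.
  exact: trans Ff (simple_act_cst Halg Xx) (simple_act_cst Halg Xz) Pfx Pxz.
have Pzy : P (c z) (c y) by apply: contrapT => nzy; exact: ntrans Xz Xy Xx nzy nyx Pzx.
exact: HA7 Ff (simple_act_cst Halg Xy) Xz Xx (conj nfz nzf) Pzy (conj nyx nxy) Pfx.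
Qed.

End ConstantActs.

Theorem lemma3 (R : realType) (V : lmodType R) (S : Type)
  (Sig : set (set S)) (X : set V) (P : (S -> V) -> (S -> V) -> Prop) :
  is_algebra Sig -> convex_set X -> non_singleton X ->
  A1 Sig X P -> A2 Sig X P -> A3 Sig X P -> A4 Sig X P ->
  A5 Sig X P -> A6 Sig X P -> A7 Sig X P ->
  forall (f : S -> V) (x y : V),
    simple_act Sig X f -> X x -> X y ->
    P f (cst_act x) ->
    (* x ≿ y, i.e. not (y ≻ x) *)
    ~ P (cst_act y) (cst_act x) ->
    P f (cst_act y).
Proof.
move=> Halg _ _ HA1 _ _ _ _ HA6 HA7 f x y Ff Xx Xy Pfx nyx.
have [Pxy|nxy] := pselect (P (@cst_act _ _ S x) (cst_act y)).
  case: HA1 => _ [trans _].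
  exact: trans Ff (simple_act_cst Halg Xx) (simple_act_cst Halg Xy) Pfx Pxy.
exact: pref_incomp_cst_trans Halg HA1 HA6 HA7 Ff Xx Xy Pfx (conj nxy nyx).
Qed.
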